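(* Let $d \ge 1$ be an integer and let $\gamma, c_1, c_2 > 0$ be real numbers. There exists a constant $K$, depending only on $d, \gamma, c_1, c_2$, such that the following holds for every positive integer $N$: if $Q = N^\gamma$, $P \subseteq \mathcal{P}(Q)$ is a set of primes with $w(P) \ge c_1 \log Q$, and $S \subseteq [N]^d$ occupies fewer than $c_2$ residue classes modulo $p$ for every prime $p \in P$, then $|S| \le K$.
   Context: $[N] = \{0,1,\ldots,N\}$. $\mathcal{P}(Q)$ denotes the set of primes $p \le Q$, and for a finite set of primes $P$, $w(P) := \sum_{p \in P} \frac{\log p}{p}$. A set $S \subseteq \mathbb{Z}^d$ occupies $m$ residue classes mod $p$ if its image in $(\mathbb{Z}/p\mathbb{Z})^d$ has $m$ elements. *)

From HB Require Import structures.
From mathcomp Require Import all_boot all_order all_algebra.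
From mathcomp Require Import reals exp.
Set Implicit Arguments. Unset Strict Implicit. Unset Printing Implicit Defensive.
Import Order.TTheory GRing.Theory Num.Theory.
Local Open Scope ring_scope.

(* Points of [N]^d = {0,...,N}^d are finite functions 'I_d -> 'I_N.+1. *)
Definition grid (d N : nat) := {ffun 'I_d -> 'I_N.+1}.

Definition reduce_mod (d N p : nat) (x : grid d N) : seq nat :=
  [seq ((x i : nat) %% p)%N | i <- enum 'I_d].

Definition num_classes (d N p : nat) (S : {set grid d N}) : nat :=
  size (undup [seq reduce_mod p x | x <- enum S]).

(* w(P) = sum_{p in P} log p / p  (P given as a duplicate-free list). *)
Definition wP (R : realType) (P : seq nat) : R :=
  \sum_(p <- P) ln (p%:R : R) / p%:R.

From HB Require Import structures.
From mathcomp Require Import all_boot all_order all_algebra.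
From mathcomp Require Import reals exp sequences.
From mathcomp Require Import lra.
Set Implicit Arguments. Unset Strict Implicit. Unset Printing Implicit Defensive.

(* Larger sieve.  Let M be the product of the primes in P and T_p the number of
   pairs (x, y) in S^2 with x = y mod p.  For x <> y, the primes p with
   x = y mod p all divide a nonzero coordinate difference, so their product is
   at most N; hence prod_p p^(T_p) <= M^|S| N^(|S|^2).  By Cauchy-Schwarz,
   T_p >= |S|^2 / C when S occupies at most C classes mod p, which gives
   M^(|S|^2) <= (M^|S| N^(|S|^2))^C, so |S| <= 2C as soon as M >= N^(2C).
   Since each prime p > m contributes at most log p / m to w(P), the weight
   hypothesis forces log M >= 2C log N once N is large; smaller N are covered
   by |S| <= (N+1)^d. *)

Lemma prod_uniq_primes_dvd (s : seq nat) n :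
  uniq s -> all prime s -> {in s, forall p, p %| n} -> \prod_(p <- s) p %| n.
Proof.
elim: s => [|q s IHs] /=; first by rewrite big_nil dvd1n.
case/andP=> q_notin_s uniq_s /andP[prime_q prime_s] dvd_n.
rewrite big_cons Gauss_dvd; last first.
  rewrite prime_coprime // Euclid_dvd_prod // big_has; apply/hasPn => p ps /=.
  rewrite dvdn_prime2 //; last exact: (allP prime_s).
  by apply: contraNneq q_notin_s => ->.
rewrite dvd_n ?mem_head // IHs // => p ps.
by apply: dvd_n; rewrite in_cons ps orbT.
Qed.

Lemma prod_uniq_primes_congr_le (s : seq nat) (Q : pred nat) a b n :
  uniq s -> all prime s -> a != b -> a <= n -> b <= n ->
  {in s, forall p, Q p -> a = b %[mod p]} -> \prod_(p <- s | Q p) p <= n.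
Proof.
move=> uniq_s prime_s neq_ab le_an le_bn congr_ab.
wlog lt_ab : a b neq_ab le_an le_bn congr_ab / a < b => [hwlog|].
  have [lt_ab|lt_ba|eq_ab] := ltngtP a b; first exact: (hwlog a b).
    apply: (hwlog b a); rewrite 1?eq_sym // => p ps Qp.
    by rewrite (congr_ab p ps Qp).
  by rewrite eq_ab eqxx in neq_ab.
apply: (@leq_trans (b - a)); last exact: leq_trans (leq_subr a b) le_bn.
apply: dvdn_leq; first by rewrite subn_gt0.
rewrite -big_filter; apply: prod_uniq_primes_dvd; first exact: filter_uniq.
  by apply/allP => p; rewrite mem_filter => /andP[_ /(allP prime_s)].
move=> p; rewrite mem_filter => /andP[Qp ps].
by rewrite -(eqn_mod_dvd _ (ltnW lt_ab)) (congr_ab p ps Qp).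
Qed.

Lemma sqr_sum_le_size_mul_sum_sqr (I : Type) (s : seq I) (F : I -> nat) :
  (\sum_(i <- s) F i) ^ 2 <= size s * \sum_(i <- s) F i ^ 2.
Proof.
rewrite -(@leq_pmul2l 2) //.
apply: (@leq_trans (\sum_(i <- s) \sum_(j <- s) (F i ^ 2 + F j ^ 2))).
  rewrite expnS expn1 big_distrl !big_distrr /=; apply: leq_sum => i _.
  rewrite !big_distrr /=; apply: leq_sum => j _.
  exact: (nat_Cauchy (F i) (F j)).1.
under eq_bigr => i _ do rewrite big_split /=.
rewrite big_split /= [X in _ + X]exchange_big /= addnn -mul2n.
rewrite leq_pmul2l // big_distrr /=; apply: eq_leq; apply: eq_bigr => i _.
by rewrite big_const_seq count_predT iter_addn_0 mulnC.
Qed.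

Section Fibres.
Variables (T : finType) (U : eqType) (f : T -> U) (A : {pred T}).

Let classes := undup [seq f x | x <- enum A].
Let fibre u := \sum_(x in A) (u == f x).

Lemma sum_fibres (F : U -> nat) :
  \sum_(x in A) F (f x) = \sum_(u <- classes) fibre u * F u.
Proof.
under [RHS]eq_bigr => u _ do rewrite big_distrl /=.
rewrite exchange_big /=; apply: eq_bigr => x Ax.
rewrite (eq_bigr (fun u => if u == f x then F u else 0)); last first.
  by move=> u _; case: ifP; rewrite ?mul1n.
rewrite -big_mkcond -big_filter filter_pred1_uniq ?undup_uniq ?big_seq1 //.
by rewrite mem_undup map_f ?mem_enum.
Qed.

Lemma card_sqr_le_classes_collisions :
  #|A| ^ 2 <= size classes * \sum_(x in A) \sum_(y in A) (f x == f y).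
Proof.
have -> : #|A| = \sum_(u <- classes) fibre u.
  by rewrite -sum1_card (sum_fibres (fun _ => 1)); under eq_bigr do rewrite muln1.
rewrite (sum_fibres fibre); under [X in _ <= _ * X]eq_bigr do rewrite mulnn.
exact: sqr_sum_le_size_mul_sum_sqr.
Qed.

End Fibres.

Lemma reduce_mod_eq_modn d N p (x y : grid d N) i :
  reduce_mod p x = reduce_mod p y -> x i = y i %[mod p].
Proof. by move/eq_in_map/(_ i (mem_enum _ i)). Qed.

Section Collisions.
Variables (d N : nat) (S : {set grid d N}).

Definition collisions p :=
  \sum_(x in S) \sum_(y in S) (reduce_mod p x == reduce_mod p y).

Lemma card_sqr_le_num_classes_collisions p :
  #|S| ^ 2 <= num_classes p S * collisions p.
Proof. exact: card_sqr_le_classes_collisions. Qed.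

Lemma prod_primes_reduce_mod_eq_le (P : seq nat) (x y : grid d N) :
  uniq P -> all prime P -> x != y ->
  \prod_(p <- P | reduce_mod p x == reduce_mod p y) p <= N.
Proof.
move=> uniq_P prime_P /eqP neq_xy.
have [i neq_xyi] : exists i, x i != y i.
  apply/existsP; apply: contra_notT neq_xy => /existsPn eq_xy.
  by apply/ffunP => i; apply/eqP/negbNE.
apply: (prod_uniq_primes_congr_le _ _ neq_xyi) => //.
1,2: by rewrite -ltnS ltn_ord.
by move=> p _ /eqP/reduce_mod_eq_modn->.
Qed.

Lemma prod_expn_collisions (P : seq nat) :
  \prod_(p <- P) p ^ collisions p =
  \prod_(x in S) \prod_(y in S)
    \prod_(p <- P | reduce_mod p x == reduce_mod p y) p.
Proof.
under eq_bigr => p _ do rewrite /collisions expn_sum; rewrite exchange_big /=.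
apply: eq_bigr => x _; under eq_bigr => p _ do rewrite expn_sum.
rewrite exchange_big /=; apply: eq_bigr => y _.
by rewrite [RHS]big_mkcond /=; apply: eq_bigr => p _; case: eqP.
Qed.

Lemma prod_expn_collisions_le (P : seq nat) :
  0 < N -> uniq P -> all prime P ->
  \prod_(p <- P) p ^ collisions p <=
  (\prod_(p <- P) p) ^ #|S| * N ^ (#|S| * #|S|).
Proof.
move=> N_gt0 uniq_P prime_P.
rewrite prod_expn_collisions -prod_nat_const expnM -prod_nat_const.
rewrite -big_split /=.
apply: leq_prod => x Sx; rewrite (bigD1 x) //= (eq_bigl predT) => [|p]; last first.
  by rewrite eqxx.
apply: leq_mul => //.
rewrite -prod_nat_const [leqRHS](bigD1 x) //= -[leqLHS]mul1n leq_mul //.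
apply: leq_prod => y /andP[_ neq_yx].
by apply: prod_primes_reduce_mod_eq_le; rewrite // eq_sym.
Qed.

Lemma card_le_of_prod_primes_ge (P : seq nat) C :
  1 < N -> 0 < C -> uniq P -> all prime P ->
  {in P, forall p, num_classes p S <= C} ->
  N ^ (2 * C) <= \prod_(p <- P) p -> #|S| <= 2 * C.
Proof.
move=> N_gt1 C_gt0 uniq_P prime_P few_classes large_prod.
set M := \prod_(p <- P) p in large_prod *; set m := #|S|.
have [->|m_gt0] := posnP m; first by [].
have M_gt1 : 1 < M.
  apply: leq_trans large_prod; rewrite (leq_trans N_gt1) // -[leqLHS]expn1.
  by rewrite leq_exp2l ?muln_gt0.
have prod_expn e (F : nat -> nat) :
    (\prod_(p <- P) F p) ^ e = \prod_(p <- P) F p ^ e.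
  exact: (big_morph _ (fun a b => expnMn a b e) (exp1n e)).
have powM_le : M ^ (m * m) <= (M ^ m * N ^ (m * m)) ^ C.
  apply: (@leq_trans ((\prod_(p <- P) p ^ collisions p) ^ C)); last first.
    by rewrite leq_exp2r // prod_expn_collisions_le // ltnW.
  rewrite /M !prod_expn big_seq_cond [leqRHS]big_seq_cond.
  apply: leq_prod => p /andP[pP _].
  rewrite -expnM leq_pexp2l ?prime_gt0 ?(allP prime_P) //.
  rewrite mulnn mulnC; apply: leq_trans (card_sqr_le_num_classes_collisions p) _.
  by rewrite leq_mul2r few_classes ?orbT.
(* Squaring lets N^(2C) <= M absorb the N-part without dividing by C. *)
have : M ^ (m * m) * M ^ (m * m) <= M ^ (m * (2 * C)) * M ^ (m * m).
  apply: leq_trans (leq_mul powM_le powM_le) _.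
  rewrite -expnD expnMn -!expnM addnn -mul2n mulnCA leq_mul // mulnC expnM.
  by rewrite leq_exp2r ?muln_gt0 ?m_gt0.
rewrite leq_pmul2r ?expn_gt0 ?(ltnW M_gt1) // leq_exp2l //.
by rewrite leq_pmul2l.
Qed.

End Collisions.

Import Order.TTheory GRing.Theory Num.Theory.
Local Open Scope ring_scope.

Lemma ln_prod (R : realType) (I : eqType) (s : seq I) (F : I -> R) :
  {in s, forall i, 0 < F i} -> ln (\prod_(i <- s) F i) = \sum_(i <- s) ln (F i).
Proof.
elim: s => [|i s IHs] F_gt0; first by rewrite !big_nil ln1.
have F_gt0_s : {in s, forall j, 0 < F j}.
  by move=> j js; rewrite F_gt0 ?in_cons ?js ?orbT.
rewrite !big_cons lnM ?IHs // posrE ?F_gt0 ?mem_head //.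
by rewrite big_seq prodr_gt0.
Qed.

Lemma ln_div_nat_le (R : realType) (p m : nat) : (0 < m)%N -> (0 < p)%N ->
  ln (p%:R : R) / p%:R <= (p <= m)%N%:R + ln (p%:R : R) / m%:R.
Proof.
move=> m_gt0 p_gt0; have p_gt0R : (0 : R) < p%:R by rewrite ltr0n.
have lnp_ge0 : 0 <= ln (p%:R : R) by rewrite ln_ge0 // ler1n.
have [le_pm|lt_mp] := leqP p m.
  have : ln (p%:R : R) / p%:R <= 1.
    by rewrite ler_pdivrMr // mul1r ltW ?ln_sublinear.
  have : 0 <= ln (p%:R : R) / m%:R by rewrite divr_ge0.
  rewrite /=; lra.
rewrite add0r ler_pdivrMr // mulrAC ler_pdivlMr ?ltr0n //.
by rewrite ler_wpM2l // ler_nat ltnW.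
Qed.

Lemma wP_le_ln_prod (R : realType) (P : seq nat) (m : nat) :
  (0 < m)%N -> uniq P -> all prime P ->
  wP R P <= m.+1%:R + ln ((\prod_(p <- P) p)%N%:R : R) / m%:R.
Proof.
move=> m_gt0 uniq_P prime_P; have p_gt0 p : p \in P -> (0 < p)%N.
  by move/(allP prime_P)/prime_gt0.
rewrite natr_prod ln_prod => [|p /p_gt0]; last by rewrite ltr0n.
rewrite mulr_suml /wP; apply: le_trans (_ : \sum_(p <- P) ((p <= m)%N%:R +
  ln (p%:R : R) / m%:R) <= _).
  rewrite big_seq [leRHS]big_seq; apply: ler_sum => p /p_gt0.
  exact: ln_div_nat_le.
rewrite big_split /= lerD2r -natr_sum ler_nat.
rewrite (eq_bigr (fun p => if (p <= m)%N then 1 else 0)%N); last first.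
  by move=> p _; case: leqP.
rewrite -big_mkcond sum1_count -size_filter -[m.+1](size_iota 0).
apply: uniq_leq_size; first exact: filter_uniq.
by move=> p; rewrite mem_filter mem_iota ltnS => /andP[].
Qed.

(* With m g >= 2A and log N >= 2(m+1)/g, the bound of wP_le_ln_prod gives
   log M >= m (g log N - m - 1) >= m g log N / 2 >= A log N. *)
Lemma prod_primes_ge_of_wP (R : realType) (g : R) (A : nat) : 0 < g ->
  exists2 N0 : nat, (1 < N0)%N & forall (N : nat) (P : seq nat),
    (N0 <= N)%N -> uniq P -> all prime P -> g * ln (N%:R : R) <= wP R P ->
    (N ^ A <= \prod_(p <- P) p)%N.
Proof.
move=> g_gt0; pose m := (Num.truncn (A%:R * 2 / g)).+1.
have lt_m : A%:R * 2 / g < m%:R := truncnS_gt _.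
pose B := m.+1%:R * 2 / g.
have B_gt0 : 0 < B by rewrite divr_gt0 // mulr_gt0.
exists (Num.truncn (expR B)).+1.
  by rewrite -(ltr_nat R) (lt_trans _ (truncnS_gt _)) // expR_gt1.
move=> N P le_N uniq_P prime_P large_wP.
have N_gt0 : (0 : R) < N%:R.
  rewrite (lt_le_trans (expR_gt0 B)) //.
  by rewrite (le_trans (ltW (truncnS_gt _))) ?ler_nat.
have B_le : B <= ln (N%:R : R).
  rewrite -[B]expRK ler_ln ?posrE ?expR_gt0 //.
  by rewrite (le_trans (ltW (truncnS_gt _))) ?ler_nat.
have prod_gt0 : (0 : R) < (\prod_(p <- P) p)%N%:R.
  rewrite ltr0n big_seq_cond prodn_cond_gt0 // => p.
  by case/andP=> /(allP prime_P)/prime_gt0.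
rewrite -(ler_nat R) natrX -ler_ln ?posrE ?exprn_gt0 // lnXn //.
have := le_trans large_wP (@wP_le_ln_prod R P m (ltn0Sn _) uniq_P prime_P).
set lnN := ln (N%:R : R); set L := ln _ => wP_bound.
have m_gt0 : (0 : R) < m%:R by rewrite ltr0n.
have lnN_ge0 : 0 <= lnN by rewrite (le_trans (ltW B_gt0)).
have lnN_large : m.+1%:R * 2 <= lnN * g by rewrite -ler_pdivrMr.
have m_large : A%:R * 2 <= m%:R * g by rewrite -ler_pdivrMr // ltW.
have L_large : (g * lnN - m.+1%:R) * m%:R <= L.
  by rewrite -ler_pdivlMr // lerBlDl.
have := ler_wpM2l (ltW m_gt0) lnN_large; have := ler_wpM2r lnN_ge0 m_large.
rewrite -mulr_natl; nra.
Qed.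

Theorem lemma3p2 (R : realType) (d : nat) (gamma c1 c2 : R) :
  (1 <= d)%N -> 0 < gamma -> 0 < c1 -> 0 < c2 ->
  exists K : nat, forall N : nat, (0 < N)%N ->
    forall (P : seq nat) (S : {set grid d N}),
      let Q : R := (N%:R : R) `^ gamma in
      uniq P ->
      (forall p, p \in P -> prime p /\ (p%:R : R) <= Q) ->
      c1 * ln Q <= wP R P ->
      (forall p, p \in P -> ((num_classes p S)%:R : R) < c2) ->
      (#|S| <= K)%N.
Proof.
move=> d_gt0 gamma_gt0 c1_gt0 _; pose C := (Num.truncn c2).+1.
have [N0 N0_gt1 large_prod] :=
  prod_primes_ge_of_wP (2 * C) (mulr_gt0 c1_gt0 gamma_gt0).
exists (maxn (2 * C) (N0 ^ d)) => N _ P S Q uniq_P P_prime large_wP few_classes.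
have prime_P : all prime P by apply/allP => p /P_prime[].
have [lt_N_N0|le_N0_N] := ltnP N N0.
  apply: leq_trans (leq_maxr _ _); apply: leq_trans (max_card _) _.
  by rewrite /grid card_ffun !card_ord leq_exp2r.
apply: leq_trans (leq_maxl _ _).
apply: (card_le_of_prod_primes_ge (leq_trans N0_gt1 le_N0_N) (ltn0Sn _)
  uniq_P prime_P).
  move=> p /few_classes lt_c2; apply: ltnW; rewrite -(ltr_nat R).
  exact: lt_trans lt_c2 (truncnS_gt c2).
by apply: large_prod; rewrite // -mulrA -ln_powR.
Qed.
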